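(* If a finitely generated residually finite group $\Gamma$ is presentable by a product, then its rank gradient vanishes: $\mathrm{RG}(\Gamma)=0$.
   Context: For a finitely generated group $\Gamma$ let $d(\Gamma)$ be the minimal number of generators. The rank gradient is $\mathrm{RG}(\Gamma)=\inf_{\Gamma'}\frac{d(\Gamma')-1}{[\Gamma:\Gamma']}$, the infimum taken over all finite index subgroups $\Gamma'\subset\Gamma$. An infinite group $\Gamma$ is presentable by a product if there exist groups $\Gamma_1,\Gamma_2$ and a homomorphism $\varphi\colon\Gamma_1\times\Gamma_2\to\Gamma$ whose image has finite index in $\Gamma$ and such that both $\varphi(\Gamma_1)$ and $\varphi(\Gamma_2)$ are infinite. *)

From Stdlib Require Import Reals List.
From Coquelicot Require Import Coquelicot.
Open Scope R_scope.

Record group := Group {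
  carrier :> Type;
  gmul : carrier -> carrier -> carrier;
  gone : carrier;
  ginv : carrier -> carrier;
  gmulA : forall x y z, gmul x (gmul y z) = gmul (gmul x y) z;
  gmul1l : forall x, gmul gone x = x;
  gmul1r : forall x, gmul x gone = x;
  gmulVl : forall x, gmul (ginv x) x = gone;
  gmulVr : forall x, gmul x (ginv x) = gone
}.

Arguments gmul {g}. Arguments gone {g}. Arguments ginv {g}.

Definition is_subgroup (G : group) (H : G -> Prop) : Prop :=
  H gone /\ (forall x y, H x -> H y -> H (gmul x y)) /\ (forall x, H x -> H (ginv x)).

Definition is_normal (G : group) (H : G -> Prop) : Prop :=
  is_subgroup G H /\ forall g x, H x -> H (gmul (gmul g x) (ginv g)).

Definition infinite_set (G : group) (A : G -> Prop) : Prop :=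
  ~ exists l : list G, forall x, A x -> In x l.

Definition infinite_group (G : group) : Prop := infinite_set G (fun _ => True).

(* [G : H] = n : there are n representatives of pairwise distinct left cosets
   g H covering G. *)
Definition has_index (G : group) (H : G -> Prop) (n : nat) : Prop :=
  exists l : list G, length l = n /\
    (forall i j, (i < n)%nat -> (j < n)%nat ->
       H (gmul (ginv (nth i l gone)) (nth j l gone)) -> i = j) /\
    (forall g, exists r, In r l /\ H (gmul (ginv r) g)).

Definition finite_index (G : group) (H : G -> Prop) : Prop :=
  exists n, has_index G H n.

Definition generated (G : group) (S : list G) (x : G) : Prop :=
  forall K : G -> Prop, is_subgroup G K -> (forall s, In s S -> K s) -> K x.

Definition generates (G : group) (H : G -> Prop) (S : list G) : Prop :=
  (forall s, In s S -> H s) /\ (forall x, H x <-> generated G S x).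

Definition min_gens (G : group) (H : G -> Prop) (k : nat) : Prop :=
  (exists S, length S = k /\ generates G H S) /\
  (forall S, generates G H S -> (k <= length S)%nat).

Definition finitely_generated (G : group) : Prop :=
  exists S : list G, generates G (fun _ => True) S.

Definition residually_finite (G : group) : Prop :=
  forall g : G, g <> gone ->
    exists N : G -> Prop, is_normal G N /\ finite_index G N /\ ~ N g.

Section Prod.
Variables G1 G2 : group.
Definition pmul (x y : G1 * G2) : G1 * G2 := (gmul (fst x) (fst y), gmul (snd x) (snd y)).
Definition pone : G1 * G2 := (gone, gone).
Definition pinv (x : G1 * G2) : G1 * G2 := (ginv (fst x), ginv (snd x)).
Lemma pmulA x y z : pmul x (pmul y z) = pmul (pmul x y) z.
Proof. destruct x, y, z; unfold pmul; simpl; now rewrite !gmulA. Qed.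
Lemma pmul1l x : pmul pone x = x.
Proof. destruct x; unfold pmul; simpl; now rewrite !gmul1l. Qed.
Lemma pmul1r x : pmul x pone = x.
Proof. destruct x; unfold pmul; simpl; now rewrite !gmul1r. Qed.
Lemma pmulVl x : pmul (pinv x) x = pone.
Proof. destruct x; unfold pmul; simpl; now rewrite !gmulVl. Qed.
Lemma pmulVr x : pmul x (pinv x) = pone.
Proof. destruct x; unfold pmul; simpl; now rewrite !gmulVr. Qed.
Definition prod_group : group :=
  Group (G1 * G2) pmul pone pinv pmulA pmul1l pmul1r pmulVl pmulVr.
End Prod.

Definition is_hom (G H : group) (f : G -> H) : Prop :=
  forall x y, f (gmul x y) = gmul (f x) (f y).

Definition presentable_by_product (G : group) : Prop :=
  infinite_group G /\
  exists (G1 G2 : group) (phi : prod_group G1 G2 -> G),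
    is_hom (prod_group G1 G2) G phi /\
    (exists K : G -> Prop, is_subgroup G K /\ finite_index G K /\
       forall y, K y <-> exists x, phi x = y) /\
    infinite_set G (fun y => exists x1 : G1, phi (x1, gone) = y) /\
    infinite_set G (fun y => exists x2 : G2, phi (gone, x2) = y).

Definition rank_gradient (G : group) : Rbar :=
  Glb_Rbar (fun r => exists (H : G -> Prop) (n k : nat),
    is_subgroup G H /\ has_index G H n /\ min_gens G H k /\
    r = (INR k - 1) / INR n).

(* Pass to the finite-index image K = A B of the product, with A and B commuting and
   infinite, and to finitely generated A0 <= A, B0 <= B with K = A0 B0.  For a normal
   subgroup N of finite index, N /\ K has index [K : A0 N] [A0 : A0 /\ N], and Schreier's
   lemma along a transversal X Y (X in B0, Y in A0) shows that it is generated by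
   d(A0) [A0 : A0 /\ N] + d(B0) [K : A0 N] elements.  If both indices can be made large
   simultaneously, the rank gradient vanishes.  Otherwise residual finiteness produces an
   infinite central subgroup Z of K (A /\ B0, B0 /\ A0 N for a maximal N, or B /\ A0), and
   cutting K by normal subgroups meeting Z in a subgroup of large index that is cyclic, or
   trivial when Z is torsion, gives the same conclusion. *)

From Stdlib Require Import Reals.
From Coquelicot Require Import Coquelicot.
From Stdlib Require Import List Lia Lra Psatz Classical ClassicalEpsilon.
Local Open Scope nat_scope.

Local Infix "⋅" := gmul (at level 40, left associativity).

Section GroupLaws.
Context {G : group}.
Implicit Types x y z : G.

Lemma gmulA_r x y z : x ⋅ y ⋅ z = x ⋅ (y ⋅ z).
Proof. now rewrite gmulA. Qed.
Lemma mulVKg x y : x ⋅ (ginv x ⋅ y) = y.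
Proof. now rewrite gmulA, gmulVr, gmul1l. Qed.
Lemma mulKg x y : ginv x ⋅ (x ⋅ y) = y.
Proof. now rewrite gmulA, gmulVl, gmul1l. Qed.
Lemma mulgK x y : x ⋅ y ⋅ ginv y = x.
Proof. now rewrite gmulA_r, gmulVr, gmul1r. Qed.
Lemma mulgI x y z : x ⋅ y = x ⋅ z -> y = z.
Proof. intro e. rewrite <- (mulKg x y), e. apply mulKg. Qed.
Lemma invg_unique x y : x ⋅ y = gone -> ginv x = y.
Proof. intro e. apply (mulgI x). now rewrite gmulVr. Qed.
Lemma invgK x : ginv (ginv x) = x.
Proof. apply invg_unique, gmulVl. Qed.
Lemma invMg x y : ginv (x ⋅ y) = ginv y ⋅ ginv x.
Proof. apply invg_unique. now rewrite gmulA_r, mulVKg, gmulVr. Qed.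
Lemma invg1 : ginv (@gone G) = gone.
Proof. apply invg_unique, gmul1l. Qed.
Lemma mulg_eq1 x y : x ⋅ y = gone -> y = ginv x.
Proof. intro e. symmetry. now apply invg_unique. Qed.
End GroupLaws.

Ltac gsimpl := repeat rewrite ?gmulA_r, ?invMg, ?invgK, ?invg1, ?gmul1l, ?gmul1r,
  ?gmulVr, ?gmulVl, ?mulVKg, ?mulKg.

Notation subgroup H := (is_subgroup _ H).

Section Cosets.
Context {G : group}.
Implicit Types (x y z : G) (H K : G -> Prop).

Definition coset_eq H x y := H (ginv x ⋅ y).
Definition separated H (l : list G) :=
  NoDup l /\ forall a b, In a l -> In b l -> coset_eq H a b -> a = b.
Definition covers H (l : list G) (P : G -> Prop) :=
  forall g, P g -> exists r, In r l /\ coset_eq H r g.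

Lemma subgroup1 H : subgroup H -> H gone. Proof. intros [? ?]; auto. Qed.
Lemma subgroupM H x y : subgroup H -> H x -> H y -> H (x ⋅ y). Proof. intros [? [? ?]]; auto. Qed.
Lemma subgroupV H x : subgroup H -> H x -> H (ginv x). Proof. intros [? [? ?]]; auto. Qed.

Definition cap (P Q : G -> Prop) g := P g /\ Q g.

Lemma cap_subgroup H K : subgroup H -> subgroup K -> subgroup (cap H K).
Proof.
  intros SH SK. split; [|split].
  - split; now apply subgroup1.
  - intros x y [] []; split; now apply subgroupM.
  - intros x []; split; now apply subgroupV.
Qed.

Lemma coset_eq_refl H x : subgroup H -> coset_eq H x x.
Proof. intro. unfold coset_eq. rewrite gmulVl. now apply subgroup1. Qed.
Lemma coset_eq_sym H x y : subgroup H -> coset_eq H x y -> coset_eq H y x.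
Proof. unfold coset_eq; intros SH h. apply subgroupV in h; auto. now rewrite invMg, invgK in h. Qed.
Lemma coset_eq_trans H x y z : subgroup H -> coset_eq H x y -> coset_eq H y z -> coset_eq H x z.
Proof.
  unfold coset_eq; intros SH h1 h2. pose proof (subgroupM _ _ _ SH h1 h2) as h.
  now rewrite gmulA_r, mulVKg in h.
Qed.
Lemma coset_eq_sub H H' x y : (forall g, H g -> H' g) -> coset_eq H x y -> coset_eq H' x y.
Proof. unfold coset_eq; auto. Qed.

Lemma separated_eq H T a b : separated H T -> In a T -> In b T -> coset_eq H a b -> a = b.
Proof. intros [_ u]; auto. Qed.
Lemma separated_sub H H' l : (forall g, H g -> H' g) -> separated H' l -> separated H l.
Proof. intros hm [nd uq]. split; auto. intros a b ha hb hab. apply uq; auto. now apply coset_eq_sub with H. Qed.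

Lemma separated_cons H T g : subgroup H -> separated H T ->
  (forall t, In t T -> ~ coset_eq H t g) -> separated H (g :: T).
Proof.
  intros SH [nd uq] hg. split.
  - constructor; auto. intro hT. apply (hg g hT). now apply coset_eq_refl.
  - intros a b [<-|ha] [<-|hb] e; auto; exfalso.
    + apply (hg b hb). now apply coset_eq_sym.
    + exact (hg a ha e).
Qed.

Lemma separated_extend H (P : G -> Prop) l : subgroup H -> forall T0,
  (forall t, In t T0 -> P t) -> separated H T0 ->
  exists T, (forall t, In t T -> P t) /\ incl T0 T /\ separated H T /\
    forall g, P g -> (exists r, In r l /\ coset_eq H r g) -> exists t, In t T /\ coset_eq H t g.
Proof.
  intro SH. induction l as [|r l IH]; intros T0 T0P T0sep.
  - exists T0. split; [auto|split; [apply incl_refl|split; [auto|]]]. intros g _ [r [[] _]].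
  - destruct (classic (exists g, P g /\ coset_eq H r g /\ ~ exists t, In t T0 /\ coset_eq H t g))
      as [[g [Pg [rg ng]]]|nex].
    + destruct (IH (g :: T0)) as [T [TP [Tinc [Tsep Tcov]]]].
      * intros t [<-|ht]; auto.
      * apply separated_cons; auto. intros t ht e. apply ng; eauto.
      * exists T. split; [auto|split; [|split; [auto|]]].
        { intros x hx. apply Tinc. now right. }
        intros g' Pg' [r' [[<-|hr'] rg']]; [|apply Tcov; eauto].
        exists g. split; [apply Tinc; now left|].
        apply coset_eq_trans with r; auto. now apply coset_eq_sym.
    + destruct (IH T0 T0P T0sep) as [T [TP [Tinc [Tsep Tcov]]]].
      exists T. split; [auto|split; [auto|split; [auto|]]].
      intros g Pg [r' [[<-|hr'] rg]]; [|apply Tcov; eauto].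
      apply NNPP. intro nt. apply nex. exists g. split; [auto|split; [auto|]].
      intros [t [ht e]]. apply nt. exists t; auto.
Qed.

Lemma exists_transversal H (P : G -> Prop) l e : subgroup H -> covers H l P -> P e ->
  exists T, (forall t, In t T -> P t) /\ In e T /\ separated H T /\ covers H T P.
Proof.
  intros SH Hl He.
  destruct (separated_extend H P l SH (e :: nil)) as [T [TP [Tinc [Tsep Tcov]]]].
  - intros t [<-|[]]; auto.
  - split. { constructor. intros []. constructor. }
    intros a b [<-|[]] [<-|[]]; auto.
  - exists T. split; [auto|split; [apply Tinc; now left|split; [auto|]]].
    intros g Pg. apply Tcov; auto.
Qed.

Lemma separated_length_le H l1 l2 : subgroup H -> separated H l1 ->
  covers H l2 (fun a => In a l1) -> length l1 <= length l2.
Proof.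
  intros SH [nd uq] hc.
  destruct (choice (fun a r => In a l1 -> In r l2 /\ coset_eq H r a)) as [f hf].
  { intro a. destruct (classic (In a l1)) as [ha|ha].
    - destruct (hc a ha) as [r hr]; exists r; auto.
    - exists a; tauto. }
  rewrite <- (length_map f). apply NoDup_incl_length.
  - apply NoDup_map_NoDup_ForallPairs; auto. intros a b ha hb e. apply uq; auto.
    destruct (hf a ha) as [_ ea], (hf b hb) as [_ eb]. rewrite e in ea.
    apply coset_eq_trans with (f b); auto. now apply coset_eq_sym.
  - intros r hr. apply in_map_iff in hr as [a [<- ha]]. now apply hf.
Qed.

Lemma has_index_of_transversal H T : subgroup H -> separated H T ->
  covers H T (fun _ => True) -> has_index G H (length T).
Proof.
  intros SH [nd uq] cov. exists T. split; auto. split.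
  - intros i j hi hj hij. apply (proj1 (NoDup_nth T gone) nd); auto.
    apply uq; auto; apply nth_In; auto.
  - intro g. destruct (cov g I) as [r [hr e]]. exists r; auto.
Qed.

Lemma has_index_transversal H n : subgroup H -> has_index G H n ->
  exists T, length T = n /\ separated H T /\ covers H T (fun _ => True).
Proof.
  intros SH [l [hl [inj cov]]]. exists l. split; auto. split.
  - assert (nd : NoDup l).
    { apply (proj2 (NoDup_nth l gone)). intros i j hi hj e. apply inj; try lia.
      rewrite e. now apply coset_eq_refl. }
    split; auto. intros a b ha hb hab.
    apply (In_nth l a gone) in ha as [i [hi <-]]. apply (In_nth l b gone) in hb as [j [hj <-]].
    f_equal. apply inj; auto; lia.
  - intros g _. destruct (cov g) as [r [hr e]]. exists r; auto.
Qed.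

Lemma covers_cap H1 H2 l1 l2 : subgroup H1 -> subgroup H2 ->
  covers H1 l1 (fun _ => True) -> covers H2 l2 (fun _ => True) ->
  exists l, covers (cap H1 H2) l (fun _ => True).
Proof.
  intros S1 S2 c1 c2.
  destruct (choice (fun (p : G * G) g => (exists g', coset_eq H1 (fst p) g' /\ coset_eq H2 (snd p) g') ->
    coset_eq H1 (fst p) g /\ coset_eq H2 (snd p) g)) as [f hf].
  { intros [a b]. destruct (classic (exists g', coset_eq H1 a g' /\ coset_eq H2 b g')) as [[g' h]|n].
    - exists g'; auto.
    - exists a; tauto. }
  exists (map f (list_prod l1 l2)). intros g _.
  destruct (c1 g I) as [r1 [i1 e1]], (c2 g I) as [r2 [i2 e2]].
  exists (f (r1, r2)). split; [apply in_map; now apply in_prod|].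
  destruct (hf (r1, r2)) as [f1 f2]; [exists g; auto|]. simpl in *.
  split; [apply (coset_eq_trans H1) with r1 | apply (coset_eq_trans H2) with r2]; auto;
    now apply coset_eq_sym.
Qed.
End Cosets.

Section Generated.
Context {G : group}.
Implicit Types (S : list G) (K : G -> Prop).

Lemma generated_subgroup S : subgroup (generated G S).
Proof.
  split; [|split].
  - intros K SK _. now apply subgroup1.
  - intros x y hx hy K SK hS. apply subgroupM; [exact SK|apply hx|apply hy]; auto.
  - intros x hx K SK hS. apply subgroupV; [exact SK|apply hx]; auto.
Qed.
Lemma generated_in S s : In s S -> generated G S s.
Proof. intros h K SK hS. auto. Qed.
Lemma generated_min S K x : subgroup K -> (forall s, In s S -> K s) -> generated G S x -> K x.
Proof. intros SK hS h. now apply h. Qed.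
Lemma generated_sub S S' x : (forall s, In s S -> generated G S' s) -> generated G S x -> generated G S' x.
Proof. intros hS h. apply (generated_min S); auto. apply generated_subgroup. Qed.
Lemma generated_app_l S S' x : generated G S x -> generated G (S ++ S') x.
Proof. apply generated_sub. intros s hs. apply generated_in. apply in_or_app; auto. Qed.
Lemma generated_app_r S S' x : generated G S' x -> generated G (S ++ S') x.
Proof. apply generated_sub. intros s hs. apply generated_in. apply in_or_app; auto. Qed.
Lemma generates_generated S : generates G (generated G S) S.
Proof. split; [intros; now apply generated_in|tauto]. Qed.
Lemma generated_nil x : generated G nil x -> x = gone.
Proof.
  apply (generated_min nil (fun x => x = gone)); [|intros s []].
  split; [|split]; auto.
  - intros x' y -> ->; apply gmul1l.
  - intros x' ->; apply invg1.
Qed.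
End Generated.

Section Schreier.
Context {G : group}.
Variables (K H : G -> Prop) (S T : list G) (rep : G -> G).
Hypotheses (SK : subgroup K) (SH : subgroup H) (HK : forall h, H h -> K h)
  (SinK : forall s, In s S -> K s) (TK : forall t, In t T -> K t) (T1 : In gone T)
  (Tsep : separated H T) (rep_spec : forall g, K g -> In (rep g) T /\ coset_eq H (rep g) g).

Definition schreier_generators : list G :=
  flat_map (fun s => map (fun t => ginv (rep (s ⋅ t)) ⋅ (s ⋅ t)) T) S.

Lemma rep_eq g t : K g -> In t T -> coset_eq H t g -> rep g = t.
Proof.
  intros kg ht e. destruct (rep_spec g kg) as [h1 h2]. apply (separated_eq H T); auto.
  apply coset_eq_trans with g; auto. now apply coset_eq_sym.
Qed.

Lemma rep_id t : In t T -> rep t = t.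
Proof. intro ht. apply rep_eq; auto. now apply coset_eq_refl. Qed.

(* Closure under products rests on rep (g ⋅ h ⋅ t) = rep (g ⋅ rep (h ⋅ t)). *)
Let schreier_closed g := K g /\
  forall t, In t T -> generated G schreier_generators (ginv (rep (g ⋅ t)) ⋅ (g ⋅ t)).

Lemma schreier_closed_subgroup : subgroup schreier_closed.
Proof.
  set (U := schreier_generators). split; [|split].
  - split; [now apply subgroup1|]. intros t ht.
    rewrite gmul1l, rep_id, gmulVl by auto. apply subgroup1, generated_subgroup.
  - intros g h [kg qg] [kh qh]. split; [now apply subgroupM|].
    intros t ht. set (t1 := rep (h ⋅ t)).
    assert (kht : K (h ⋅ t)) by (apply subgroupM; auto).
    destruct (rep_spec _ kht) as [t1T t1e]. fold t1 in t1T, t1e.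
    assert (kgt1 : K (g ⋅ t1)) by (apply subgroupM; auto).
    assert (e : rep (g ⋅ t1) = rep (g ⋅ h ⋅ t)).
    { destruct (rep_spec _ kgt1) as [a b]. symmetry. apply rep_eq; auto.
      - apply subgroupM; auto; apply subgroupM; auto.
      - apply coset_eq_trans with (g ⋅ t1); auto.
        unfold coset_eq. rewrite invMg, !gmulA_r, mulKg. exact t1e. }
    pose proof (subgroupM _ _ _ (generated_subgroup U) (qg t1 t1T) (qh t ht)) as P.
    rewrite e in P. fold t1 in P. rewrite !gmulA_r, mulVKg in P. rewrite !gmulA_r. exact P.
  - intros g [kg qg]. split; [now apply subgroupV|].
    intros t ht. set (t1 := rep (ginv g ⋅ t)).
    assert (kgt : K (ginv g ⋅ t)) by (apply subgroupM; auto; now apply subgroupV).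
    destruct (rep_spec _ kgt) as [t1T t1e]. fold t1 in t1T, t1e.
    assert (e : rep (g ⋅ t1) = t).
    { apply rep_eq; auto; [apply subgroupM; auto|]. unfold coset_eq in *.
      pose proof (subgroupV _ _ SH t1e) as P. rewrite !invMg, !invgK, !gmulA_r in P. exact P. }
    pose proof (subgroupV _ _ (generated_subgroup U) (qg t1 t1T)) as P. rewrite e in P.
    rewrite invMg, invMg, invgK, gmulA_r in P. exact P.
Qed.

Lemma schreier_generators_spec u : In u schreier_generators ->
  exists s t t', In s S /\ In t T /\ In t' T /\ coset_eq H t' (s ⋅ t) /\ u = ginv t' ⋅ (s ⋅ t).
Proof.
  intro hu. apply in_flat_map in hu as [s [hs hu]]. apply in_map_iff in hu as [t [<- ht]].
  assert (kst : K (s ⋅ t)) by (apply subgroupM; auto).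
  exists s, t, (rep (s ⋅ t)). destruct (rep_spec _ kst). repeat split; auto.
Qed.

Lemma schreier_generators_generate h :
  (forall k, K k -> generated G S k) -> H h -> generated G schreier_generators h.
Proof.
  intros Kgen hh.
  assert (SinQ : forall s, In s S -> schreier_closed s).
  { intros s hs. split; auto. intros t ht. apply generated_in. apply in_flat_map.
    exists s; split; auto. apply in_map_iff. exists t; auto. }
  destruct (generated_min S _ h schreier_closed_subgroup SinQ (Kgen h (HK h hh))) as [_ qh].
  specialize (qh gone T1). rewrite gmul1r, (rep_eq h gone), invg1, gmul1l in qh; auto.
  unfold coset_eq. now rewrite invg1, gmul1l.
Qed.
End Schreier.

Lemma schreier {G : group} (K H : G -> Prop) S T : subgroup K -> subgroup H ->
  (forall h, H h -> K h) -> generates G K S ->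
  (forall t, In t T -> K t) -> In gone T -> separated H T -> covers H T K ->
  exists U, length U = length S * length T /\
    (forall u, In u U -> exists s t t', In s S /\ In t T /\ In t' T /\
       coset_eq H t' (s ⋅ t) /\ u = ginv t' ⋅ (s ⋅ t)) /\
    (forall h, H h -> generated G U h).
Proof.
  intros SK SH HK [SinK Kgen] TK T1 Tsep Tcov.
  destruct (choice (fun g t => K g -> In t T /\ coset_eq H t g)) as [rep hrep].
  { intro g. destruct (classic (K g)) as [kg|nk].
    - destruct (Tcov g kg) as [t ht]. exists t; auto.
    - exists gone; tauto. }
  exists (schreier_generators S T rep). split; [|split].
  - apply flat_map_constant_length. intros; apply length_map.
  - apply (schreier_generators_spec K H); auto.
  - intros h hh. apply (schreier_generators_generate K H S T rep); auto. intros k hk. now apply Kgen.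
Qed.

Lemma NoDup_list_prod {A B : Type} (X : list A) (Y : list B) :
  NoDup X -> NoDup Y -> NoDup (list_prod X Y).
Proof.
  induction X as [|x X IH]; intros nx ny; simpl; [constructor|].
  inversion nx; subst. apply NoDup_app; auto.
  - apply NoDup_map_NoDup_ForallPairs; auto. intros a b _ _ e; now inversion e.
  - intros [a b] h1 h2. apply in_map_iff in h1 as [c [e _]]. inversion e; subst.
    apply in_prod_iff in h2 as [h _]. auto.
Qed.

Ltac in_subgroup := repeat (match goal with
  | |- _ (gmul _ _) => apply subgroupM
  | |- _ (ginv _) => apply subgroupV end); auto.

Section ProductTransversal.
Context {G : group}.
Implicit Types (K N : G -> Prop).

Definition prodset A0 N g := exists a n, A0 a /\ N n /\ g = a ⋅ n.
Definition normalizes K N := forall k n, K k -> N n -> N (k ⋅ n ⋅ ginv k).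
Definition list_mul (X Y : list G) := map (fun p => fst p ⋅ snd p) (list_prod X Y).

Lemma normalizesV K N k n : subgroup K -> normalizes K N -> K k -> N n -> N (ginv k ⋅ n ⋅ k).
Proof.
  intros SK h hk hn. pose proof (h (ginv k) n (subgroupV _ _ SK hk) hn) as e.
  now rewrite invgK in e.
Qed.

Lemma prodset_subgroup K A0 N : subgroup K -> subgroup A0 -> subgroup N ->
  (forall g, A0 g -> K g) -> normalizes K N -> subgroup (prodset A0 N).
Proof.
  intros SK SA SN AK nN. split; [|split].
  - exists gone, gone. split; [|split]; try now apply subgroup1. now rewrite gmul1l.
  - intros g h [a [n [ha [hn ->]]]] [a' [n' [ha' [hn' ->]]]].
    exists (a ⋅ a'), (ginv a' ⋅ n ⋅ a' ⋅ n'). split; [|split].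
    + now apply subgroupM.
    + apply subgroupM; auto. apply normalizesV with K; auto.
    + gsimpl. reflexivity.
  - intros g [a [n [ha [hn ->]]]]. exists (ginv a), (a ⋅ ginv n ⋅ ginv a). split; [|split].
    + now apply subgroupV.
    + apply nN; auto. now apply subgroupV.
    + gsimpl. reflexivity.
Qed.

Lemma prodset_r A0 N g : subgroup A0 -> N g -> prodset A0 N g.
Proof. intros SA h. exists gone, g. split; [now apply subgroup1|split; auto]. now rewrite gmul1l. Qed.
Lemma prodset_l A0 N g : subgroup N -> A0 g -> prodset A0 N g.
Proof. intros SN h. exists g, gone. split; [auto|split; [now apply subgroup1|]]. now rewrite gmul1r. Qed.
Lemma prodset_sub A0 N1 N2 g : (forall x, N1 x -> N2 x) -> prodset A0 N1 g -> prodset A0 N2 g.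
Proof. intros h [a [n [ha [hn ->]]]]. exists a, n. auto. Qed.

Section Transversal.
Variables (K A0 B0 N : G -> Prop) (X Y : list G).
Hypotheses (SK : subgroup K) (SA : subgroup A0) (SB : subgroup B0) (SN : subgroup N)
  (AK : forall g, A0 g -> K g) (BK : forall g, B0 g -> K g) (NK : forall g, N g -> K g)
  (nN : normalizes K N) (comm : forall a b, A0 a -> B0 b -> a ⋅ b = b ⋅ a)
  (XB : forall x, In x X -> B0 x) (X1 : In gone X)
  (Xsep : separated (prodset A0 N) X) (Xcov : covers (prodset A0 N) X K)
  (YA : forall y, In y Y -> A0 y) (Y1 : In gone Y) (Ysep : separated N Y) (Ycov : covers N Y A0).

Lemma list_mul_inj x x' y y' : In x X -> In x' X -> In y Y -> In y' Y ->
  coset_eq N (x ⋅ y) (x' ⋅ y') -> x = x' /\ y = y'.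
Proof.
  intros hx hx' hy hy' e. unfold coset_eq in e.
  assert (x = x').
  { apply (separated_eq (prodset A0 N) X); auto. unfold coset_eq.
    exists (y ⋅ ginv y'), (y' ⋅ (ginv (x ⋅ y) ⋅ (x' ⋅ y')) ⋅ ginv y'). split; [|split].
    - apply subgroupM; auto. apply subgroupV; auto.
    - apply nN; auto.
    - gsimpl. reflexivity. }
  subst. split; auto. apply (separated_eq N Y); auto. unfold coset_eq.
  rewrite invMg, gmulA_r, mulKg in e. exact e.
Qed.

Lemma list_mul_transversal : length (list_mul X Y) = length X * length Y /\
  (forall t, In t (list_mul X Y) -> K t) /\ In gone (list_mul X Y) /\
  separated N (list_mul X Y) /\ covers N (list_mul X Y) K.
Proof.
  split; [|split; [|split; [|split]]].
  - unfold list_mul. now rewrite length_map, length_prod.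
  - intros t ht. apply in_map_iff in ht as [[x y] [<- hp]]. apply in_prod_iff in hp as [hx hy].
    simpl. apply subgroupM; auto.
  - apply in_map_iff. exists (gone, gone). split; [apply gmul1l|now apply in_prod].
  - split.
    + apply NoDup_map_NoDup_ForallPairs; [|apply NoDup_list_prod; [apply Xsep|apply Ysep]].
      intros [x y] [x' y'] h1 h2 e. apply in_prod_iff in h1, h2. simpl in e.
      destruct (list_mul_inj x x' y y') as [-> ->]; try tauto.
      unfold coset_eq. rewrite e, gmulVl. now apply subgroup1.
    + intros a b ha hb e. apply in_map_iff in ha as [[x y] [<- h1]].
      apply in_map_iff in hb as [[x' y'] [<- h2]].
      apply in_prod_iff in h1, h2. simpl in *. destruct (list_mul_inj x x' y y') as [-> ->]; tauto.
  - intros k hk. destruct (Xcov k hk) as [x [hx [a [n [ha [hn e]]]]]].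
    destruct (Ycov a ha) as [y [hy ey]]. exists (x ⋅ y). split.
    + apply in_map_iff. exists (x, y). split; auto. now apply in_prod.
    + unfold coset_eq in *. rewrite invMg, gmulA_r, e, <- gmulA_r. now apply subgroupM.
Qed.

(* The Schreier generators of N for the transversal X Y coming from a generator s of A0
   lie in A0; those coming from a generator s of B0 are an element of A0 times one of |X|
   elements of N attached to s.  This is where the count |SBl| |X| comes from. *)
Lemma schreier_word_A s x x' y y' : A0 s -> In x X -> In x' X -> In y Y -> In y' Y ->
  N (ginv (x' ⋅ y') ⋅ (s ⋅ (x ⋅ y))) -> A0 (ginv (x' ⋅ y') ⋅ (s ⋅ (x ⋅ y))).
Proof.
  intros As hx hx' hy hy' e.
  assert (cx : s ⋅ x = x ⋅ s) by auto.
  assert (x' = x).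
  { apply (separated_eq (prodset A0 N) X); auto. unfold coset_eq.
    exists (y' ⋅ (ginv y ⋅ ginv s)), ((s ⋅ y) ⋅ (ginv (x' ⋅ y') ⋅ (s ⋅ (x ⋅ y))) ⋅ ginv (s ⋅ y)).
    split; [|split].
    - in_subgroup.
    - apply nN; auto. apply subgroupM; auto.
    - gsimpl. replace (s ⋅ (x ⋅ ginv s)) with x; [reflexivity|].
      rewrite <- gmulA_r, cx. now rewrite mulgK. }
  subst x'. replace (ginv (x ⋅ y') ⋅ (s ⋅ (x ⋅ y))) with (ginv y' ⋅ (s ⋅ y)).
  - in_subgroup.
  - gsimpl. rewrite <- (gmulA_r s x y), cx. gsimpl. reflexivity.
Qed.

Lemma schreier_word_B s x x' x'' y y' y2 : B0 s -> In x X -> In x' X -> In x'' X ->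
  In y Y -> In y' Y -> In y2 Y ->
  N (ginv (x' ⋅ y') ⋅ (s ⋅ (x ⋅ y))) -> N (ginv y2 ⋅ (ginv x'' ⋅ (s ⋅ x))) ->
  ginv (x' ⋅ y') ⋅ (s ⋅ (x ⋅ y)) = (ginv y' ⋅ y ⋅ y2) ⋅ (ginv y2 ⋅ (ginv x'' ⋅ (s ⋅ x))).
Proof.
  intros Bs hx hx' hx'' hy hy' hy2 e hv.
  set (v := ginv y2 ⋅ (ginv x'' ⋅ (s ⋅ x))) in *.
  assert (x'' = x').
  { apply (separated_eq (prodset A0 N) X); auto. unfold coset_eq.
    exists (y2 ⋅ y ⋅ ginv y'),
      ((y' ⋅ ginv y) ⋅ v ⋅ ginv (y' ⋅ ginv y) ⋅ (y' ⋅ ginv (ginv (x' ⋅ y') ⋅ (s ⋅ (x ⋅ y))) ⋅ ginv y')).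
    split; [|split].
    - in_subgroup.
    - apply subgroupM; auto.
      + apply nN; auto. in_subgroup.
      + apply nN; [in_subgroup|]. now apply subgroupV.
    - unfold v. gsimpl. reflexivity. }
  subst x''. unfold v.
  assert (hb : ginv x' ⋅ (s ⋅ x) ⋅ y = y ⋅ (ginv x' ⋅ (s ⋅ x))).
  { symmetry. apply comm; in_subgroup. }
  gsimpl. f_equal. rewrite <- hb. gsimpl. reflexivity.
Qed.

Lemma normal_subgroup_generators SAl SBl : generates G K (SAl ++ SBl) ->
  (forall s, In s SAl -> A0 s) -> (forall s, In s SBl -> B0 s) ->
  exists V, length V = length SBl * length X /\ (forall v, In v V -> N v) /\
  forall E, (forall v, In v V -> generated G E v) -> (forall a, A0 a -> N a -> generated G E a) ->
    forall n, N n -> generated G E n.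
Proof.
  intros Kgen SAA SBB.
  destruct (choice (fun (p : G * G) v => In (fst p) SBl -> In (snd p) X ->
     exists x'' y2, In x'' X /\ In y2 Y /\ N v /\ v = ginv y2 ⋅ (ginv x'' ⋅ (fst p ⋅ snd p))))
    as [vf hvf].
  { intros [s x]. destruct (classic (In s SBl /\ In x X)) as [[hs hx]|nn].
    - assert (ksx : K (s ⋅ x)) by (apply subgroupM; auto).
      destruct (Xcov _ ksx) as [x'' [hx'' [a [n [ha [hn e]]]]]].
      destruct (Ycov a ha) as [y2 [hy2 ey]].
      exists (ginv y2 ⋅ (ginv x'' ⋅ (s ⋅ x))). intros _ _. exists x'', y2. repeat split; auto.
      unfold coset_eq in *. simpl. rewrite e, <- gmulA_r. now apply subgroupM.
    - exists gone. intros h1 h2. exfalso; tauto. }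
  exists (map vf (list_prod SBl X)). split; [|split].
  - now rewrite length_map, length_prod.
  - intros v hv. apply in_map_iff in hv as [[s x] [<- hp]]. apply in_prod_iff in hp as [hs hx].
    destruct (hvf (s, x) hs hx) as [? [? [? [? [? ?]]]]]; auto.
  - intros E hV hAN n hn.
    destruct list_mul_transversal as [_ [TK [T1 [Tsep Tcov]]]].
    destruct (schreier K N (SAl ++ SBl) (list_mul X Y)) as [U [_ [hU genU]]]; auto.
    apply (generated_sub U); auto.
    intros u hu. destruct (hU u hu) as [s [t [t' [hs [ht [ht' [e ->]]]]]]].
    apply in_map_iff in ht as [[x y] [<- hp]]. apply in_prod_iff in hp as [hx hy].
    apply in_map_iff in ht' as [[x' y'] [<- hp']]. apply in_prod_iff in hp' as [hx' hy'].
    simpl in *. unfold coset_eq in e.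
    apply in_app_or in hs as [hs|hs].
    + apply hAN; auto. apply (schreier_word_A s x x' y y'); auto.
    + destruct (hvf (s, x) hs hx) as [x'' [y2 [hx'' [hy2 [hv ev]]]]]. simpl in ev.
      assert (ew : ginv (x' ⋅ y') ⋅ (s ⋅ (x ⋅ y)) = (ginv y' ⋅ y ⋅ y2) ⋅ vf (s, x)).
      { rewrite ev. apply (schreier_word_B s x x' x''); auto. now rewrite <- ev. }
      rewrite ew. apply subgroupM; [apply generated_subgroup| |apply hV; apply in_map; now apply in_prod].
      apply hAN; [in_subgroup|].
      replace (ginv y' ⋅ y ⋅ y2) with (ginv (x' ⋅ y') ⋅ (s ⋅ (x ⋅ y)) ⋅ ginv (vf (s, x)))
        by (rewrite ew; apply mulgK).
      apply subgroupM; auto. now apply subgroupV.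
Qed.
End Transversal.
End ProductTransversal.

Lemma exists_least_nat (P : nat -> Prop) n : P n -> exists m, P m /\ forall k, P k -> m <= k.
Proof.
  revert P. induction n as [n IH] using (well_founded_induction Nat.lt_wf_0). intros P hn.
  destruct (classic (exists k, k < n /\ P k)) as [[k [hk pk]]|nk].
  - exact (IH k hk P pk).
  - exists n. split; auto. intros k pk. destruct (Nat.lt_ge_cases k n); auto. exfalso; eauto.
Qed.

Lemma rank_ratio_le (k n a b c m : nat) : k <= a -> b <= n -> 0 < b -> 0 < m -> m * a <= c * b ->
  ((INR k - 1) / INR n <= INR c / INR m)%R.
Proof.
  intros h1 h2 h3 h4 h5.
  apply le_INR in h1, h2, h5. apply lt_INR in h3, h4. rewrite !mult_INR in h5. simpl in h3, h4.
  assert (0 <= INR c)%R by apply pos_INR.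
  apply Rmult_le_reg_r with (INR m * INR n)%R; [nra|].
  replace ((INR k - 1) / INR n * (INR m * INR n))%R with ((INR k - 1) * INR m)%R by (field; lra).
  replace (INR c / INR m * (INR m * INR n))%R with (INR c * INR n)%R by (field; lra).
  nra.
Qed.

Lemma Glb_Rbar_eq0 (E : R -> Prop) (c : nat) : (forall r, E r -> 0 <= r)%R ->
  (forall m, 0 < m -> exists r, E r /\ (r <= INR c / INR m)%R) -> Glb_Rbar E = Finite 0.
Proof.
  intros lb small. apply is_glb_Rbar_unique. split.
  - intros x hx. simpl. now apply lb.
  - intros b hb. destruct b as [b| |]; simpl; auto.
    + destruct (Rle_or_lt b 0) as [h|h]; auto. exfalso.
      assert (hc : (0 < INR c + 1)%R) by (pose proof (pos_INR c); lra).
      destruct (archimed_cor1 (b / (INR c + 1))) as [m [hm1 hm2]].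
      { apply Rdiv_lt_0_compat; lra. }
      destruct (small m hm2) as [r [hr hrc]]. specialize (hb r hr). simpl in hb.
      apply lt_INR in hm2. simpl in hm2.
      assert (INR c / INR m < b)%R; [|lra].
      apply Rmult_lt_compat_r with (r := (INR c + 1)%R) in hm1; auto.
      replace (b / (INR c + 1) * (INR c + 1))%R with b in hm1 by (field; lra).
      unfold Rdiv. pose proof (Rinv_0_lt_compat _ hm2). nra.
    + destruct (small 1 Nat.lt_0_1) as [r [hr _]]. exact (hb r hr).
Qed.

Section RankGradient.
Context {G : group}.

Lemma exists_min_gens (H : G -> Prop) E : generates G H E -> exists k, min_gens G H k /\ k <= length E.
Proof.
  intro hE.
  destruct (exists_least_nat (fun k => exists S, length S = k /\ generates G H S) (length E))
    as [m [[S [hS gS]] hm]]; eauto.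
  exists m. split; [split; [eauto|]|apply hm; eauto]. intros S' g'. apply hm. eauto.
Qed.

Lemma rank_ratio_nonneg (H : G -> Prop) n k : infinite_group G -> subgroup H ->
  has_index G H n -> min_gens G H k -> (0 <= (INR k - 1) / INR n)%R.
Proof.
  intros Ginf SH hi [[S [hS gS]] _].
  destruct (has_index_transversal H n SH hi) as [T [hT [_ Tcov]]].
  assert (n > 0).
  { destruct (Tcov gone I) as [t [ht _]]. subst n. destruct T; [destruct ht|simpl; lia]. }
  assert (k > 0).
  { destruct k as [|k]; [|lia]. exfalso. destruct S; [|discriminate].
    apply Ginf. exists T. intros g _. destruct (Tcov g I) as [t [ht et]].
    apply gS, generated_nil in et. replace g with t; auto.
    rewrite <- (mulVKg t g), et. now rewrite gmul1r. }
  assert (h1 : (1 <= INR k)%R) by (apply (le_INR 1); lia).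
  assert (h0 : (1 <= INR n)%R) by (apply (le_INR 1); lia).
  apply Rdiv_le_0_compat; lra.
Qed.

Definition small_rank_subgroups (K : G -> Prop) c := forall R, exists H E T,
  subgroup H /\ generates G H E /\ separated H T /\ (forall t, In t T -> K t) /\
  covers H T K /\ R * length E <= c * length T.

Lemma rank_gradient_eq0 (K : G -> Prop) c : infinite_group G -> subgroup K ->
  (exists LK, covers K LK (fun _ => True)) -> small_rank_subgroups K c -> rank_gradient G = Finite 0.
Proof.
  intros Ginf SK [LK cK] small. apply Glb_Rbar_eq0 with c.
  { intros r [H [n [k [SH [hi [mk ->]]]]]]. now apply rank_ratio_nonneg with H. }
  intros m hm. destruct (small m) as [H [E [T [SH [gE [Tsep [TK [Tcov hmE]]]]]]]].
  assert (cov : covers H (list_mul LK T) (fun _ => True)).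
  { intros g _. destruct (cK g I) as [r [hr er]]. destruct (Tcov _ er) as [t [ht et]].
    exists (r ⋅ t). split.
    - apply in_map_iff. exists (r, t). split; auto. now apply in_prod.
    - unfold coset_eq in *. now rewrite invMg, gmulA_r. }
  destruct (exists_transversal H (fun _ => True) (list_mul LK T) gone) as [T' [_ [_ [T'sep T'cov]]]]; auto.
  destruct (exists_min_gens H E gE) as [k [mk hk]].
  assert (hTT : length T <= length T').
  { apply separated_length_le with H; auto. intros a _. now apply T'cov. }
  assert (hT : 0 < length T).
  { destruct (Tcov gone (subgroup1 K SK)) as [t [ht _]]. destruct T; [destruct ht|simpl; lia]. }
  exists ((INR k - 1) / INR (length T'))%R. split.
  - exists H, (length T'), k. split; [auto|split; [now apply has_index_of_transversal|auto]].
  - apply rank_ratio_le with (length E) (length T); auto.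
Qed.
End RankGradient.

Section FiniteIndexNormal.
Context {G : group}.
Implicit Types (K N : G -> Prop).

Definition fin_normal N := is_normal G N /\ exists l, covers N l (fun _ => True).

Lemma fin_normal_of_index N : is_normal G N -> finite_index G N -> fin_normal N.
Proof.
  intros nN [k hk]. split; auto.
  destruct (has_index_transversal N k (proj1 nN) hk) as [T [_ [_ cT]]]. eauto.
Qed.

Lemma fin_normal_top : fin_normal (fun _ => True).
Proof.
  split; [split; [split; auto|auto]|].
  exists (gone :: nil). intros g _. exists gone. split; [now left|exact I].
Qed.

Lemma fin_normal_cap N1 N2 : fin_normal N1 -> fin_normal N2 -> fin_normal (cap N1 N2).
Proof.
  intros [[S1 n1] [l1 c1]] [[S2 n2] [l2 c2]]. split; [split|].
  - now apply cap_subgroup.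
  - intros g x []; split; auto.
  - apply covers_cap with l1 l2; auto.
Qed.

Lemma residually_finite_avoid : residually_finite G -> forall l, (forall g, In g l -> g <> gone) ->
  exists N, fin_normal N /\ forall g, In g l -> ~ N g.
Proof.
  intros rf l. induction l as [|a l IH]; intros hl.
  - exists (fun _ => True). split; [apply fin_normal_top|intros g []].
  - destruct IH as [N [gN hN]]; [intros; apply hl; now right|].
    destruct (rf a) as [N1 [n1 [f1 h1]]]; [apply hl; now left|].
    exists (cap N1 N). split; [apply fin_normal_cap; auto; now apply fin_normal_of_index|].
    intros g [<-|hg] [h h']; auto. apply (hN g); auto.
Qed.

Lemma residually_finite_separated : residually_finite G -> forall l, NoDup l ->
  exists N, fin_normal N /\ separated N l.
Proof.
  intros rf l nd.
  destruct (residually_finite_avoid rf (map (fun p => ginv (fst p) ⋅ snd p)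
      (filter (fun p => if excluded_middle_informative (fst p = snd p) then false else true)
        (list_prod l l)))) as [N [gN hN]].
  { intros g hg. apply in_map_iff in hg as [[a b] [<- hq]]. apply filter_In in hq as [_ hq].
    simpl in *. destruct excluded_middle_informative as [|ne]; try discriminate. intro e.
    apply ne. rewrite <- (mulVKg a b), e. symmetry; apply gmul1r. }
  exists N. split; auto. split; auto. intros a b ha hb e. apply NNPP. intro ne.
  apply (hN (ginv a ⋅ b)); auto. apply in_map_iff. exists (a, b). split; auto.
  apply filter_In. split; [now apply in_prod|]. simpl. destruct excluded_middle_informative; tauto.
Qed.

Lemma fin_normal_trace K N : subgroup K -> fin_normal N ->
  subgroup (cap N K) /\ normalizes K (cap N K) /\
  exists l, (forall x, In x l -> K x) /\ covers (cap N K) l K.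
Proof.
  intros SK [[SN nN] [l cl]]. split; [|split].
  - now apply cap_subgroup.
  - intros k n hk [hn hn']. split; [now apply nN|in_subgroup].
  - destruct (exists_transversal N K l gone) as [l' [hl' [_ [_ cl']]]]; auto.
    { intros g _. now apply cl. }
    { now apply subgroup1. }
    exists l'. split; auto.
    intros g kg. destruct (cl' g kg) as [r [hr e]]. exists r. split; auto. split; auto. in_subgroup.
Qed.
End FiniteIndexNormal.

Section Powers.
Context {G : group}.
Implicit Types (a : G) (W : G -> Prop).

Fixpoint gpow a n : G := match n with 0 => gone | S n => a ⋅ gpow a n end.

Lemma gpowD a i j : gpow a (i + j) = gpow a i ⋅ gpow a j.
Proof. induction i as [|i IH]; simpl; [now rewrite gmul1l|now rewrite IH, gmulA_r]. Qed.

Lemma gpowB a i j : i <= j -> ginv (gpow a i) ⋅ gpow a j = gpow a (j - i).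
Proof. intro h. replace j with (i + (j - i)) at 1 by lia. rewrite gpowD. apply mulKg. Qed.

Lemma subgroup_gpow W a i : subgroup W -> W a -> W (gpow a i).
Proof. intros SW ha. induction i; simpl; [now apply subgroup1|now apply subgroupM]. Qed.

Lemma gpow_conjV W a : (forall w, W w -> W (ginv a ⋅ w ⋅ a)) ->
  forall i w, W w -> W (ginv (gpow a i) ⋅ w ⋅ gpow a i).
Proof.
  intros h i. induction i as [|i IH]; intros w hw; simpl.
  - now rewrite gmul1r, invg1, gmul1l.
  - replace (ginv (a ⋅ gpow a i) ⋅ w ⋅ (a ⋅ gpow a i))
      with (ginv (gpow a i) ⋅ (ginv a ⋅ w ⋅ a) ⋅ gpow a i) by (gsimpl; reflexivity).
    apply IH. now apply h.
Qed.

Definition gpow_span W a m g := exists i w, i < m /\ W w /\ g = gpow a i ⋅ w.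

Lemma gpow_span_subgroup W a m : subgroup W -> 0 < m -> W (gpow a m) ->
  (forall w, W w -> W (ginv a ⋅ w ⋅ a)) -> subgroup (gpow_span W a m).
Proof.
  intros SW hm hW nW. split; [|split].
  - exists 0, gone. split; auto. split; [now apply subgroup1|]. simpl. now rewrite gmul1l.
  - intros g h [i [w [hi [hw ->]]]] [j [w' [hj [hw' ->]]]].
    set (w'' := ginv (gpow a j) ⋅ w ⋅ gpow a j ⋅ w').
    assert (e : gpow a i ⋅ w ⋅ (gpow a j ⋅ w') = gpow a (i + j) ⋅ w'').
    { unfold w''. rewrite gpowD. gsimpl. reflexivity. }
    assert (Ww'' : W w'') by (apply subgroupM; auto; now apply gpow_conjV).
    rewrite e. destruct (Nat.lt_ge_cases (i + j) m) as [h|h].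
    + exists (i + j), w''. auto.
    + exists (i + j - m), (gpow a m ⋅ w''). split; [lia|split; [now apply subgroupM|]].
      replace (i + j) with ((i + j - m) + m) at 1 by lia. now rewrite gpowD, gmulA_r.
  - intros g [i [w [hi [hw ->]]]]. destruct i as [|i].
    + exists 0, (ginv w). split; auto. split; [now apply subgroupV|]. simpl. now rewrite !gmul1l.
    + exists (m - S i), (ginv (gpow a (m - S i)) ⋅ ginv w ⋅ gpow a (m - S i) ⋅ ginv (gpow a m)).
      split; [lia|split].
      * apply subgroupM; [auto| |now apply subgroupV]. apply gpow_conjV; auto. now apply subgroupV.
      * assert (em : gpow a m = gpow a (S i) ⋅ gpow a (m - S i)) by (rewrite <- gpowD; f_equal; lia).
        rewrite em. gsimpl. reflexivity.
Qed.

Lemma gpow_span_self W a m : subgroup W -> 0 < m -> W (gpow a m) -> gpow_span W a m a.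
Proof.
  intros SW hm hW. destruct (Nat.eq_dec m 1) as [->|h].
  - exists 0, a. simpl in *. rewrite gmul1r in hW. split; auto. split; auto. now rewrite gmul1l.
  - exists 1, gone. split; [lia|split; [now apply subgroup1|]]. simpl. now rewrite !gmul1r.
Qed.

Lemma centralizer_subgroup (b : G) : subgroup (fun g => g ⋅ b = b ⋅ g).
Proof.
  split; [|split].
  - now rewrite gmul1l, gmul1r.
  - intros x y hx hy. now rewrite gmulA_r, hy, <- gmulA_r, hx, gmulA_r.
  - intros x hx. apply (mulgI x). rewrite mulVKg, <- gmulA_r, hx, mulgK. reflexivity.
Qed.

Lemma generated_central S (K : G -> Prop) : (forall s, In s S -> forall k, K k -> s ⋅ k = k ⋅ s) ->
  forall a k, generated G S a -> K k -> a ⋅ k = k ⋅ a.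
Proof.
  intros hS a k ha hk. apply (generated_min S (fun g => g ⋅ k = k ⋅ g)); auto.
  apply centralizer_subgroup.
Qed.
End Powers.

Lemma infinite_set_list {G : group} (Z : G -> Prop) : infinite_set G Z ->
  forall R, exists l, NoDup l /\ length l = R /\ forall x, In x l -> Z x.
Proof.
  intros hZ R. induction R as [|R [l [nd [hl hz]]]].
  - exists nil. repeat split; auto. constructor. intros _ [].
  - destruct (classic (exists z, Z z /\ ~ In z l)) as [[z [zz nz]]|n].
    + exists (z :: l). split; [constructor; auto|]. split; [simpl; lia|]. intros x [<-|hx]; auto.
    + exfalso. apply hZ. exists l. intros x zx. apply NNPP. intro h. apply n. eauto.
Qed.

Section CommutingProduct.
Context {G : group}.
Variables (K A0 B0 : G -> Prop).
Hypotheses (SK : subgroup K) (SA0 : subgroup A0) (SB0 : subgroup B0)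
  (AK : forall g, A0 g -> K g) (BK : forall g, B0 g -> K g)
  (comm : forall a b, A0 a -> B0 b -> a ⋅ b = b ⋅ a)
  (decomp : forall k, K k -> exists a b, A0 a /\ B0 b /\ k = a ⋅ b).

Lemma exists_prodset_transversal N l : subgroup N -> normalizes K N -> covers N l K ->
  exists X, (forall x, In x X -> B0 x) /\ In gone X /\
    separated (prodset A0 N) X /\ covers (prodset A0 N) X K.
Proof.
  intros SN nN lc.
  assert (SAN := prodset_subgroup K A0 N SK SA0 SN AK nN).
  destruct (exists_transversal (prodset A0 N) B0 l gone) as [X [XB [X1 [Xsep Xc]]]]; auto.
  - intros g bg. destruct (lc g (BK g bg)) as [r [hr e]]. exists r. split; auto.
    apply coset_eq_sub with N; auto. intros; now apply prodset_r.
  - now apply subgroup1.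
  - exists X. split; [auto|split; [auto|split; [auto|]]].
    intros k hk. destruct (decomp k hk) as [a [b [ha [hb ->]]]].
    destruct (Xc b hb) as [x [hx e]]. exists x. split; auto. unfold coset_eq in *.
    assert (cx : a ⋅ ginv x = ginv x ⋅ a) by (apply comm; auto; apply subgroupV; auto).
    rewrite <- gmulA_r, <- cx, gmulA_r. apply subgroupM; auto. now apply prodset_l.
Qed.

Definition large_prodset_index N R := exists l, (forall x, In x l -> K x) /\
  separated (prodset A0 (cap N K)) l /\ R <= length l.
Definition large_factor_index N R := exists l, (forall x, In x l -> A0 x) /\
  separated (cap N K) l /\ R <= length l.

(* N /\ K has index [K : A0 N] [A0 : A0 /\ N] and is generated by
   |SAl| [A0 : A0 /\ N] + |SBl| [K : A0 N] elements. *)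
Lemma small_rank_of_large_quotients SAl SBl : generates G K (SAl ++ SBl) -> generates G A0 SAl ->
  (forall s, In s SBl -> B0 s) ->
  (forall R, exists N, fin_normal N /\ large_prodset_index N R /\ large_factor_index N R) ->
  small_rank_subgroups K (length SAl + length SBl).
Proof.
  intros Kgen Agen SBB large R.
  destruct (large R) as [N [gN [[l1 [l1K [l1sep hl1]]] [l2 [l2A [l2sep hl2]]]]]].
  destruct (fin_normal_trace K N SK gN) as [SN [nN [l [lK lc]]]].
  set (Nk := cap N K) in *.
  assert (NkK : forall g, Nk g -> K g) by (intros g []; auto).
  assert (SAN := prodset_subgroup K A0 Nk SK SA0 SN AK nN).
  destruct (exists_prodset_transversal Nk l) as [X [XB [X1 [Xsep Xcov]]]]; auto.
  destruct (exists_transversal Nk A0 l gone) as [Y [YA [Y1 [Ysep Ycov]]]]; auto.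
  { intros g hg. now apply lc, AK. }
  { now apply subgroup1. }
  assert (SAA : forall s, In s SAl -> A0 s) by apply Agen.
  destruct (normal_subgroup_generators K A0 B0 Nk X Y SK SA0 SB0 SN AK BK NkK nN comm
    XB X1 Xsep Xcov YA Y1 Ysep Ycov SAl SBl Kgen SAA SBB) as [V [hVl [hVN hVgen]]].
  assert (SAN' : subgroup (cap A0 Nk)) by now apply cap_subgroup.
  destruct (schreier A0 (cap A0 Nk) SAl Y) as [UA [hUl [hUf hUg]]]; auto.
  { intros h []; auto. }
  { apply separated_sub with Nk; auto. intros g []; auto. }
  { intros a ha. destruct (Ycov a ha) as [y [hy e]]. exists y. split; auto. split; auto.
    apply subgroupM; auto. apply subgroupV; auto. }
  assert (UAN : forall u, In u UA -> cap A0 Nk u).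
  { intros u hu. destruct (hUf u hu) as [a [t [t' [_ [_ [_ [e ->]]]]]]]. apply e. }
  destruct (list_mul_transversal K A0 B0 Nk X Y SK SA0 SN AK BK nN XB X1 Xsep Xcov YA Y1 Ysep Ycov)
    as [Tl [TK [_ [Tsep Tcov]]]].
  exists Nk, (UA ++ V), (list_mul X Y). split; auto. split; [|split; [auto|split; [auto|split; [auto|]]]].
  - split.
    + intros s hs. apply in_app_or in hs as [hs|hs]; auto. now apply UAN.
    + intro x. split.
      * intro hx. apply hVgen; auto.
        -- intros v hv. apply generated_in. apply in_or_app; auto.
        -- intros a ha hn. apply generated_app_l. apply hUg. split; auto.
      * apply generated_min; auto. intros s hs. apply in_app_or in hs as [hs|hs]; auto. now apply UAN.
  - assert (hX : length l1 <= length X).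
    { apply separated_length_le with (prodset A0 Nk); auto. intros a ha. apply Xcov; auto. }
    assert (hY : length l2 <= length Y).
    { apply separated_length_le with Nk; auto. intros a ha. apply Ycov; auto. }
    rewrite length_app, hUl, hVl, Tl. nia.
Qed.
End CommutingProduct.

Section CentralSubgroup.
Context {G : group}.
Variables (K : G -> Prop) (Sl : list G).
Hypotheses (SK : subgroup K) (Kgen : generates G K Sl).

Let central (A0 : G -> Prop) := forall a k, A0 a -> K k -> a ⋅ k = k ⋅ a.

(* The case B0 = K of [normal_subgroup_generators], where Ea generates A0 /\ N. *)
Lemma small_rank_of_central_cut (A0 N : G -> Prop) (Y Ea : list G) :
  subgroup A0 -> (forall a, A0 a -> K a) -> central A0 -> fin_normal N ->
  (forall y, In y Y -> A0 y) -> In gone Y -> separated (cap N K) Y -> covers (cap N K) Y A0 ->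
  (forall e, In e Ea -> cap N K e) -> (forall a, A0 a -> cap N K a -> generated G Ea a) ->
  exists H E T x, subgroup H /\ generates G H E /\ separated H T /\ (forall t, In t T -> K t) /\
    covers H T K /\ length E = length Sl * x + length Ea /\ length T = x * length Y /\ 1 <= x.
Proof.
  intros SA0 AK comm gN YA Y1 Ysep Ycov EaN EaGen.
  destruct (fin_normal_trace K N SK gN) as [SN [nN [l [lK lc]]]].
  set (Nk := cap N K) in *.
  assert (NkK : forall g, Nk g -> K g) by (intros g []; auto).
  assert (decomp : forall k, K k -> exists a b, A0 a /\ K b /\ k = a ⋅ b).
  { intros k hk. exists gone, k. split; [now apply subgroup1|split; auto]. now rewrite gmul1l. }
  destruct (exists_prodset_transversal K A0 K SK SA0 SK AK (fun g h => h) comm decomp Nk l)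
    as [X [XB [X1 [Xsep Xcov]]]]; auto.
  destruct (normal_subgroup_generators K A0 K Nk X Y SK SA0 SK SN AK (fun g h => h) NkK nN comm
    XB X1 Xsep Xcov YA Y1 Ysep Ycov nil Sl Kgen (fun s (h : In s nil) => match h with end)
    (proj1 Kgen)) as [V [hVl [hVN hVgen]]].
  destruct (list_mul_transversal K A0 K Nk X Y SK SA0 SN AK (fun g h => h) nN
    XB X1 Xsep Xcov YA Y1 Ysep Ycov) as [Tl [TK [_ [Tsep Tcov]]]].
  exists Nk, (Ea ++ V), (list_mul X Y), (length X).
  split; [auto|split; [|split; [auto|split; [auto|split; [auto|split; [|split; [auto|]]]]]]].
  - split.
    + intros s hs. apply in_app_or in hs as [hs|hs]; auto.
    + intro x. split.
      * intro hx. apply hVgen; auto.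
        -- intros v hv. apply generated_app_r, generated_in; auto.
        -- intros a ha hn. apply generated_app_l; auto.
      * apply generated_min; auto. intros s hs. apply in_app_or in hs as [hs|hs]; auto.
  - rewrite length_app, hVl. lia.
  - destruct X; [destruct X1|simpl; lia].
Qed.

Lemma gpow_coset_inj (W : G -> Prop) z q : subgroup W -> (forall d, 0 < d < q -> ~ W (gpow z d)) ->
  forall i j, i < q -> j < q -> coset_eq W (gpow z i) (gpow z j) -> i = j.
Proof.
  intros SW hq i j hi hj e. destruct (Nat.lt_trichotomy i j) as [h|[->|h]]; auto; exfalso.
  - unfold coset_eq in e. rewrite gpowB in e by lia. apply (hq (j - i)); auto; lia.
  - apply coset_eq_sym in e; auto. unfold coset_eq in e. rewrite gpowB in e by lia.
    apply (hq (i - j)); auto; lia.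
Qed.

Lemma gpow_separated (W : G -> Prop) z q : subgroup W -> (forall d, 0 < d < q -> ~ W (gpow z d)) ->
  separated W (map (gpow z) (seq 0 q)).
Proof.
  intros SW hq. assert (inj := gpow_coset_inj W z q SW hq). split.
  - apply NoDup_map_NoDup_ForallPairs; [|apply seq_NoDup].
    intros i j hi hj e. apply in_seq in hi, hj. apply inj; try lia. rewrite e. now apply coset_eq_refl.
  - intros a b ha hb e. apply in_map_iff in ha as [i [<- hi]]. apply in_map_iff in hb as [j [<- hj]].
    apply in_seq in hi, hj. f_equal. apply inj; auto; lia.
Qed.

Lemma exists_order_mod (W : G -> Prop) l z : subgroup W -> K z -> covers W l K ->
  exists q, 0 < q /\ W (gpow z q) /\ forall d, 0 < d < q -> ~ W (gpow z d).
Proof.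
  intros SW Kz lc.
  assert (ex : exists d, 0 < d /\ W (gpow z d)).
  { apply NNPP. intro nex.
    assert (h := separated_length_le W (map (gpow z) (seq 0 (S (length l)))) l SW).
    rewrite length_map, length_seq in h.
    assert (S (length l) <= length l); [|lia].
    apply h.
    - apply gpow_separated; auto. intros d hd hw. apply nex. exists d. split; [lia|auto].
    - intros a ha. apply lc. apply in_map_iff in ha as [i [<- _]]. now apply subgroup_gpow. }
  destruct ex as [d hd].
  destruct (exists_least_nat (fun d => 0 < d /\ W (gpow z d)) d hd) as [q [[hq0 hqW] hqmin]].
  exists q. split; [auto|split; [auto|]]. intros d' hd' hw. specialize (hqmin d' (conj (proj1 hd') hw)). lia.
Qed.

Lemma gpow_covers (W : G -> Prop) z q : subgroup W -> 0 < q -> W (gpow z q) ->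
  (forall w, W w -> W (ginv z ⋅ w ⋅ z)) ->
  covers W (map (gpow z) (seq 0 q)) (generated G (z :: nil)).
Proof.
  intros SW hq hW nW a ha.
  destruct (generated_min (z :: nil) _ a (gpow_span_subgroup W z q SW hq hW nW)) as [i [w [hi [hw ->]]]]; auto.
  - intros s [<-|[]]. now apply gpow_span_self.
  - exists (gpow z i). split; [apply in_map, in_seq; lia|]. unfold coset_eq. now rewrite mulKg.
Qed.

Lemma gpow_comm (z : G) i : z ⋅ gpow z i = gpow z i ⋅ z.
Proof.
  induction i as [|i IH]; simpl; [now rewrite gmul1l, gmul1r|].
  now rewrite (gmulA_r z (gpow z i) z), <- IH.
Qed.

Lemma cyclic_cap_generated (W : G -> Prop) z q : subgroup W -> 0 < q -> W (gpow z q) ->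
  (forall d, 0 < d < q -> ~ W (gpow z d)) ->
  forall a, generated G (z :: nil) a -> W a -> generated G (gpow z q :: nil) a.
Proof.
  intros SW hq hW hmin a ha hWa.
  set (C := generated G (gpow z q :: nil)).
  assert (SC : subgroup C) by apply generated_subgroup.
  assert (CW : forall w, C w -> W w) by (intros w hw; apply (generated_min (gpow z q :: nil)); auto;
    intros s [<-|[]]; auto).
  assert (nC : forall w, C w -> C (ginv z ⋅ w ⋅ z)).
  { intros w hw.
    assert (czw : w ⋅ z = z ⋅ w).
    { apply (generated_central (gpow z q :: nil) (fun k => k = z)); auto.
      intros s [<-|[]] k ->. symmetry. apply gpow_comm. }
    now rewrite gmulA_r, czw, mulKg. }
  assert (hqC : C (gpow z q)) by (apply generated_in; now left).
  destruct (generated_min (z :: nil) _ a (gpow_span_subgroup C z q SC hq hqC nC)) as [i [w [hi [hw ->]]]]; auto.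
  { intros s [<-|[]]. now apply gpow_span_self. }
  destruct i as [|i].
  - simpl. now rewrite gmul1l.
  - exfalso. apply (hmin (S i)); [lia|].
    replace (gpow z (S i)) with (gpow z (S i) ⋅ w ⋅ ginv w) by apply mulgK.
    apply subgroupM; auto. apply subgroupV; auto.
Qed.

Lemma small_rank_of_central_infinite_order z : residually_finite G -> K z ->
  (forall k, K k -> z ⋅ k = k ⋅ z) -> (forall m, 0 < m -> gpow z m <> gone) ->
  small_rank_subgroups K (length Sl + 1).
Proof.
  intros rf Kz zc zinf R.
  destruct (residually_finite_avoid rf (map (gpow z) (seq 1 R))) as [N [gN hN]].
  { intros g hg. apply in_map_iff in hg as [i [<- hi]]. apply in_seq in hi. apply zinf. lia. }
  destruct (fin_normal_trace K N SK gN) as [SN [nN [l [lK lc]]]].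
  set (A0 := generated G (z :: nil)).
  assert (AK : forall g, A0 g -> K g).
  { intros g hg. apply (generated_min (z :: nil)); auto. intros s [<-|[]]; auto. }
  assert (comm : central A0).
  { intros a k ha hk. apply (generated_central (z :: nil) K); auto. intros s [<-|[]]; auto. }
  destruct (exists_order_mod (cap N K) l z SN Kz lc) as [q [hq0 [hqN hqmin]]].
  assert (hqR : R < q).
  { destruct (Nat.lt_ge_cases R q) as [h|h]; auto. exfalso. apply (hN (gpow z q)); [|apply hqN].
    apply in_map, in_seq. lia. }
  destruct (small_rank_of_central_cut A0 N (map (gpow z) (seq 0 q)) (gpow z q :: nil))
    as [H [E [T [x [SH [gE [Tsep [TK [Tcov [hE [hT hx]]]]]]]]]]]; auto.
  - apply generated_subgroup.
  - intros y hy. apply in_map_iff in hy as [i [<- _]]. apply subgroup_gpow; [apply generated_subgroup|].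
    apply generated_in. now left.
  - apply in_map_iff. exists 0. split; auto. apply in_seq. lia.
  - now apply gpow_separated.
  - apply gpow_covers; auto. intros w hw. apply normalizesV with K; auto.
  - intros e [<-|[]]; auto.
  - intros a ha hn. now apply cyclic_cap_generated with (cap N K).
  - exists H, E, T. repeat (split; auto). rewrite hE, hT, length_map, length_seq. simpl. nia.
Qed.

Lemma generated_central_torsion_finite l : (forall a, In a l -> K a /\
  (forall k, K k -> a ⋅ k = k ⋅ a) /\ exists m, 0 < m /\ gpow a m = gone) ->
  exists FL, forall g, generated G l g -> In g FL.
Proof.
  induction l as [|a l IH]; intros hl.
  - exists (gone :: nil). intros g hg. left. symmetry. now apply generated_nil.
  - destruct IH as [FL0 hFL0]; [intros; apply hl; now right|].
    destruct (hl a (or_introl eq_refl)) as [Ka [ca [m [hm am]]]].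
    set (W := generated G l).
    assert (SW : subgroup W) by apply generated_subgroup.
    assert (WK : forall w, W w -> K w).
    { intros w hw. apply (generated_min l); auto. intros s hs. apply hl; now right. }
    assert (Wam : W (gpow a m)) by (rewrite am; now apply subgroup1).
    assert (SP : subgroup (gpow_span W a m)).
    { apply gpow_span_subgroup; auto. intros w hw. rewrite gmulA_r, <- (ca w (WK w hw)). now rewrite mulKg. }
    exists (flat_map (fun i => map (fun f => gpow a i ⋅ f) FL0) (seq 0 m)).
    intros g hg. apply (generated_min (a :: l) _ g SP) in hg.
    + destruct hg as [i [w [hi [hw ->]]]]. apply in_flat_map. exists i.
      split; [apply in_seq; lia|]. apply in_map. now apply hFL0.
    + intros s [<-|hs]; [now apply gpow_span_self|].
      exists 0, s. split; auto. split; [now apply generated_in|]. simpl. now rewrite gmul1l.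
Qed.

Lemma small_rank_of_central_torsion (Z : G -> Prop) : residually_finite G ->
  (forall z, Z z -> K z) -> (forall z k, Z z -> K k -> z ⋅ k = k ⋅ z) -> infinite_set G Z ->
  (forall z, Z z -> exists m, 0 < m /\ gpow z m = gone) -> small_rank_subgroups K (length Sl).
Proof.
  intros rf ZK zc Zinf ztor R.
  destruct (infinite_set_list Z Zinf R) as [lz [lznd [lzl lzZ]]].
  set (F := generated G lz).
  assert (SF : subgroup F) by apply generated_subgroup.
  destruct (generated_central_torsion_finite lz) as [FL hFL]; [intros a ha; auto|].
  assert (FK : forall g, F g -> K g) by (intros g hg; apply (generated_min lz); auto).
  assert (comm : central F) by (intros a k ha hk; apply (generated_central lz K); auto).
  set (eqdec := fun x y : G => excluded_middle_informative (x = y)).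
  destruct (residually_finite_separated rf (nodup eqdec FL) (NoDup_nodup eqdec FL)) as [N [gN Nsep]].
  assert (FN : forall f, F f -> N f -> f = gone).
  { intros f hf hn. symmetry. apply (separated_eq N (nodup eqdec FL)); auto.
    - apply nodup_In, hFL. now apply subgroup1.
    - apply nodup_In, hFL. auto.
    - unfold coset_eq. now rewrite invg1, gmul1l. }
  destruct (fin_normal_trace K N SK gN) as [SN [nN [l [lK lc]]]].
  destruct (exists_transversal (cap N K) F l gone) as [Y [YF [Y1 [Ysep Ycov]]]]; auto.
  { intros g hg. now apply lc, FK. }
  { now apply subgroup1. }
  destruct (small_rank_of_central_cut F N Y nil)
    as [H [E [T [x [SH [gE [Tsep [TK [Tcov [hE [hT hx]]]]]]]]]]]; auto.
  { intros e []. }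
  { intros a ha [hn _]. rewrite (FN a ha hn). apply subgroup1, generated_subgroup. }
  assert (hY : length lz <= length Y).
  { apply separated_length_le with (cap N K); auto.
    - split; auto. intros a b ha hb [e _].
      assert (ginv a ⋅ b = gone) as e1.
      { apply FN; auto. apply subgroupM; auto; [apply subgroupV|]; auto; apply generated_in; auto. }
      rewrite <- (mulVKg a b), e1. symmetry. apply gmul1r.
    - intros a ha. apply Ycov. now apply generated_in. }
  exists H, E, T. repeat (split; auto). rewrite hE, hT. simpl. nia.
Qed.

Lemma small_rank_of_infinite_center (Z : G -> Prop) : residually_finite G ->
  (forall z, Z z -> K z) -> (forall z k, Z z -> K k -> z ⋅ k = k ⋅ z) -> infinite_set G Z ->
  exists c, small_rank_subgroups K c.
Proof.
  intros rf ZK zc Zinf.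
  destruct (classic (exists z, Z z /\ forall m, 0 < m -> gpow z m <> gone)) as [[z [hz hzi]]|n].
  - exists (length Sl + 1). apply small_rank_of_central_infinite_order with z; auto.
  - exists (length Sl). apply small_rank_of_central_torsion with Z; auto.
    intros z hz. apply NNPP. intro h. apply n. exists z. split; auto. intros m hm e. apply h. eauto.
Qed.
End CentralSubgroup.

Lemma exists_greatest_nat (P : nat -> Prop) n b : P n -> (forall m, P m -> m < b) ->
  exists m, P m /\ forall k, P k -> k <= m.
Proof.
  intros hn hb.
  destruct (exists_least_nat (fun d => P (b - d)) (b - n)) as [d [hd dmin]].
  { replace (b - (b - n)) with n by (specialize (hb n hn); lia). exact hn. }
  exists (b - d). split; auto. intros k hk.
  assert (hk' : P (b - (b - k))) by (replace (b - (b - k)) with k by (specialize (hb k hk); lia); exact hk).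
  specialize (dmin _ hk'). specialize (hb k hk). lia.
Qed.

Section Center.
Context {G : group}.

Lemma infinite_cap (P Q C : G -> Prop) : subgroup P -> subgroup Q -> (forall c, C c -> P c) ->
  (forall p, P p -> exists c q, C c /\ Q q /\ p = c ⋅ q) -> (exists LC, forall c, C c -> In c LC) ->
  infinite_set G P -> infinite_set G (cap P Q).
Proof.
  intros SP SQ CP dec [LC hLC] Pinf [LZ hLZ]. apply Pinf. exists (list_mul LC LZ).
  intros p hp. destruct (dec p hp) as [c [q [hc [hq ->]]]].
  apply in_map_iff. exists (c, q). split; auto. apply in_prod; auto. apply hLZ. split; auto.
  replace q with (ginv c ⋅ (c ⋅ q)) by apply mulKg. apply subgroupM; auto. apply subgroupV; auto.
Qed.

(* Writing z = a0 n, the commutator [z, b] = a0 [n, b] a0^-1 lies in every normal N of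
   finite index. *)
Lemma residually_trivial_commutator (A0 : G -> Prop) z b : residually_finite G ->
  (forall a, A0 a -> a ⋅ b = b ⋅ a) -> (forall N, fin_normal N -> prodset A0 N z) -> z ⋅ b = b ⋅ z.
Proof.
  intros rf cb hz. set (c := z ⋅ b ⋅ ginv z ⋅ ginv b).
  destruct (classic (c = gone)) as [ce|cne].
  - rewrite <- (gmul1l _ (b ⋅ z)), <- ce. unfold c. gsimpl. reflexivity.
  - exfalso. destruct (rf c cne) as [N1 [nN1 [fN1 hN1]]].
    destruct (hz N1 (fin_normal_of_index N1 nN1 fN1)) as [a0 [nu [ha0 [hnu ez]]]].
    apply hN1. destruct nN1 as [SN1 nrm1].
    assert (cab : ginv a0 ⋅ ginv b = ginv b ⋅ ginv a0).
    { rewrite <- !invMg. f_equal. symmetry. now apply cb. }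
    replace c with (a0 ⋅ (nu ⋅ (b ⋅ ginv nu ⋅ ginv b)) ⋅ ginv a0).
    + apply nrm1. apply subgroupM; auto. apply nrm1. now apply subgroupV.
    + unfold c. rewrite ez. gsimpl. rewrite cab. reflexivity.
Qed.
End Center.

Section Dichotomy.
Context {G : group}.
Variables (K A0 : G -> Prop).
Hypotheses (SK : subgroup K) (SA0 : subgroup A0) (A0K : forall g, A0 g -> K g).

Lemma large_prodset_index_sub N N' R : (forall g, N' g -> N g) ->
  large_prodset_index K A0 N R -> large_prodset_index K A0 N' R.
Proof.
  intros h [l [lK [lsep hl]]]. exists l. split; [auto|split; [|auto]].
  apply separated_sub with (prodset A0 (cap N K)); auto. intro g. apply prodset_sub.
  intros x [? ?]; split; auto.
Qed.

Lemma large_factor_index_sub N N' R : (forall g, N' g -> N g) ->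
  large_factor_index K A0 N R -> large_factor_index K A0 N' R.
Proof.
  intros h [l [lA [lsep hl]]]. exists l. split; [auto|split; [|auto]].
  apply separated_sub with (cap N K); auto. intros g [? ?]; split; auto.
Qed.

(* When the index [K : A0 (N /\ K)] stays bounded, a separated family Xs of maximal size
   is a transversal for every finer N. *)
Lemma exists_maximal_prodset_family R0 :
  (forall N, fin_normal N -> ~ large_prodset_index K A0 N R0) ->
  exists Ns Xs, fin_normal Ns /\ (forall x, In x Xs -> K x) /\ In gone Xs /\
    separated (prodset A0 (cap Ns K)) Xs /\
    forall N, fin_normal N -> separated (prodset A0 (cap N K)) Xs -> covers (prodset A0 (cap N K)) Xs K.
Proof.
  intros bounded.
  set (fam := fun m => exists N l, fin_normal N /\ (forall x, In x l -> K x) /\ In gone l /\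
    separated (prodset A0 (cap N K)) l /\ length l = m).
  assert (fam1 : fam 1).
  { exists (fun _ => True), (gone :: nil). split; [apply fin_normal_top|].
    split; [intros x [<-|[]]; now apply subgroup1|]. split; [now left|]. split; auto.
    split; [constructor; [intros []|constructor]|]. intros a b [<-|[]] [<-|[]] _; auto. }
  assert (fam_lt : forall m, fam m -> m < R0).
  { intros m [N [l [gN [lK [_ [lsep <-]]]]]]. apply Nat.nle_gt. intro h.
    apply (bounded N gN). exists l. auto. }
  destruct (exists_greatest_nat fam 1 R0 fam1 fam_lt) as [m [[Ns [Xs [gNs [XsK [Xs1 [Xssep <-]]]]]] mmax]].
  exists Ns, Xs. split; [auto|split; [auto|split; [auto|split; [auto|]]]].
  intros N gN hsep g hg. apply NNPP. intro ng.
  destruct (fin_normal_trace K N SK gN) as [SNk [nNk _]].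
  assert (hfam : fam (S (length Xs))); [|specialize (mmax _ hfam); lia].
  exists N, (g :: Xs). split; [auto|split; [intros x [<-|hx]; auto|split; [now right|split; auto]]].
  apply separated_cons; auto; [apply prodset_subgroup with K; auto|].
  intros x hx e. apply ng. eauto.
Qed.

Lemma exists_residual_prodset R0 :
  (forall N, fin_normal N -> ~ large_prodset_index K A0 N R0) ->
  exists Ns, fin_normal Ns /\
    forall N b, fin_normal N -> K b -> prodset A0 (cap Ns K) b -> prodset A0 (cap N K) b.
Proof.
  intro bounded.
  destruct (exists_maximal_prodset_family R0 bounded) as [Ns [Xs [gNs [XsK [Xs1 [Xssep maxcov]]]]]].
  exists Ns. split; auto. intros N b gN hb hL.
  set (L := prodset A0 (cap Ns K)).
  destruct (fin_normal_trace K Ns SK gNs) as [SNs [nNs _]].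
  assert (SL : subgroup L) by (apply prodset_subgroup with K; auto).
  set (N' := cap N Ns).
  assert (gN' : fin_normal N') by (apply fin_normal_cap; auto).
  destruct (fin_normal_trace K N' SK gN') as [SN' [nN' _]].
  assert (sub : forall g, prodset A0 (cap N' K) g -> L g).
  { intro g. apply prodset_sub. intros x [[? ?] ?]; split; auto. }
  assert (sep' : separated (prodset A0 (cap N' K)) Xs) by (apply separated_sub with L; auto).
  destruct (maxcov N' gN' sep' b hb) as [x [hx ex]].
  assert (x = gone).
  { apply (separated_eq L Xs); auto. apply coset_eq_trans with b; auto.
    - apply coset_eq_sub with (prodset A0 (cap N' K)); auto.
    - unfold coset_eq. rewrite gmul1r. now apply subgroupV. }
  subst x. unfold coset_eq in ex. rewrite invg1, gmul1l in ex. revert ex. apply prodset_sub.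
  intros x [[? ?] ?]; split; auto.
Qed.
End Dichotomy.

Section CommutingFactors.
Context {G : group}.
Variables (K A B A0 B0 : G -> Prop).
Hypotheses (rf : residually_finite G) (SK : subgroup K) (SA : subgroup A) (SB : subgroup B)
  (SA0 : subgroup A0) (SB0 : subgroup B0) (A0A : forall g, A0 g -> A g) (B0B : forall g, B0 g -> B g)
  (AK : forall g, A g -> K g) (BK : forall g, B g -> K g)
  (commAB : forall a b, A a -> B b -> a ⋅ b = b ⋅ a)
  (decomp : forall k, K k -> exists a b, A0 a /\ B0 b /\ k = a ⋅ b).

Let A0K g (h : A0 g) : K g := AK g (A0A g h).
Let B0K g (h : B0 g) : K g := BK g (B0B g h).
Let comm0 a b (ha : A0 a) (hb : B0 b) : a ⋅ b = b ⋅ a := commAB a b (A0A a ha) (B0B b hb).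

Let infinite_center := exists Z, (forall z, Z z -> K z) /\
  (forall z k, Z z -> K k -> z ⋅ k = k ⋅ z) /\ infinite_set G Z.

Lemma central_of_commute z : (forall a, A0 a -> z ⋅ a = a ⋅ z) -> (forall b, B0 b -> z ⋅ b = b ⋅ z) ->
  forall k, K k -> z ⋅ k = k ⋅ z.
Proof.
  intros ca cb k hk. destruct (decomp k hk) as [a [b [ha [hb ->]]]].
  rewrite gmulA, ca, gmulA_r, cb; auto. apply gmulA.
Qed.

(* A0 is then finite, and A /\ B0 is an infinite central subgroup. *)
Lemma center_of_bounded_factor_index R0 : infinite_set G A ->
  (forall N, fin_normal N -> ~ large_factor_index K A0 N R0) -> infinite_center.
Proof.
  intros Ainf bounded.
  assert (A0fin : exists LA, forall a, A0 a -> In a LA).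
  { apply NNPP. intro A0inf.
    destruct (infinite_set_list A0 A0inf R0) as [lA [ndA [hlA lAA]]].
    destruct (residually_finite_separated rf lA ndA) as [N [gN Nsep]].
    apply (bounded N gN). exists lA. split; [auto|split; [|lia]].
    apply separated_sub with N; auto. intros g []; auto. }
  exists (cap A B0). split; [intros z [hz _]; auto|split].
  - intros z k [hzA hzB] hk. apply central_of_commute; auto.
    intros a ha. symmetry. now apply comm0.
  - apply infinite_cap with A0; auto.
Qed.

(* With L = A0 (Ns /\ K) as in [exists_residual_prodset], B0 /\ L is central; it is
   infinite if B0 is, and otherwise B /\ A0 is an infinite central subgroup. *)
Lemma center_of_bounded_prodset_index R0 : infinite_set G B ->
  (forall N, fin_normal N -> ~ large_prodset_index K A0 N R0) -> infinite_center.
Proof.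
  intros Binf bounded.
  destruct (exists_residual_prodset K A0 SK SA0 A0K R0 bounded) as [Ns [gNs inL]].
  destruct (fin_normal_trace K Ns SK gNs) as [SNs [nNs [l [lK lc]]]].
  set (L := prodset A0 (cap Ns K)).
  assert (SL : subgroup L) by (apply prodset_subgroup with K; auto).
  destruct (classic (infinite_set G B0)) as [B0inf|B0fin].
  - exists (cap B0 L). split; [intros z [hz _]; auto|split].
    + intros z k [hzB hzL] hk. apply central_of_commute; auto.
      * intros a ha. symmetry. now apply comm0.
      * intros b hb. apply residually_trivial_commutator with A0; auto.
        intros N gN. apply prodset_sub with (cap N K); [intros x []; auto|]. apply inL; auto.
    + destruct (exists_prodset_transversal K A0 B0 SK SA0 SB0 A0K B0K comm0 decomp (cap Ns K) l)
        as [X [XB [_ [_ Xcov]]]]; auto.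
      apply infinite_cap with (fun x => In x X); auto.
      * intros b hb. destruct (Xcov b (B0K b hb)) as [x [hx e]].
        exists x, (ginv x ⋅ b). split; [auto|split; [auto|now rewrite mulVKg]].
      * exists X. auto.
  - apply NNPP in B0fin. exists (cap B A0). split; [intros z [hz _]; auto|split].
    + intros z k [hzB hzA] hk. apply central_of_commute; auto.
      intros a ha. symmetry. apply commAB; auto.
    + apply infinite_cap with B0; auto.
      intros b hb. destruct (decomp b (BK b hb)) as [a0 [b0 [ha0 [hb0 ->]]]].
      exists b0, a0. split; [auto|split; [auto|]]. now apply comm0.
Qed.

Lemma small_rank_of_commuting_product la lb : generates G K (la ++ lb) -> generates G A0 la ->
  (forall s, In s lb -> B0 s) -> infinite_set G A -> infinite_set G B ->
  exists c, small_rank_subgroups K c.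
Proof.
  intros Kgen Agen lbB Ainf Binf.
  destruct (classic (forall R, exists N, fin_normal N /\
    large_prodset_index K A0 N R /\ large_factor_index K A0 N R)) as [large|nlarge].
  { exists (length la + length lb). now apply (small_rank_of_large_quotients K A0 B0). }
  apply not_all_ex_not in nlarge as [R0 nlarge].
  assert (center : infinite_center).
  { destruct (classic (exists N, fin_normal N /\ large_factor_index K A0 N R0)) as [[N2 [gN2 h2]]|no2].
    - apply (center_of_bounded_prodset_index R0 Binf). intros N1 gN1 h1.
      apply nlarge. exists (cap N1 N2). split; [now apply fin_normal_cap|split].
      + apply large_prodset_index_sub with N1; auto. intros g []; auto.
      + apply large_factor_index_sub with N2; auto. intros g []; auto.
    - apply (center_of_bounded_factor_index R0 Ainf). intros N gN h. apply no2. eauto. }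
  destruct center as [Z [ZK [Zc Zinf]]].
  apply (small_rank_of_infinite_center K (la ++ lb)) with Z; auto.
Qed.
End CommutingFactors.

Section Presentation.
Context {G : group}.

Lemma hom1 (H : group) (f : H -> G) : is_hom H G f -> f gone = gone.
Proof.
  intro hf. apply (mulgI (f gone)). rewrite <- hf, !gmul1r. reflexivity.
Qed.

Lemma hom_range_subgroup (H : group) (f : H -> G) : is_hom H G f -> subgroup (fun y => exists x, f x = y).
Proof.
  intro hf. split; [|split].
  - exists gone. now apply hom1.
  - intros x y [a <-] [b <-]. exists (a ⋅ b). apply hf.
  - intros x [a <-]. exists (ginv a). apply mulg_eq1. rewrite <- hf, gmulVr. now apply hom1.
Qed.

Lemma presentation_commuting_factors : presentable_by_product G ->
  exists K A B, subgroup K /\ finite_index G K /\ subgroup A /\ subgroup B /\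
    (forall g, A g -> K g) /\ (forall g, B g -> K g) /\
    (forall a b, A a -> B b -> a ⋅ b = b ⋅ a) /\ (forall k, K k -> prodset A B k) /\
    infinite_set G A /\ infinite_set G B.
Proof.
  intros [_ [G1 [G2 [phi [hom [[K [SK [fiK Kimg]]] [Ainf Binf]]]]]]].
  assert (hp : forall a b c d, phi (a, b) ⋅ phi (c, d) = phi (a ⋅ c, b ⋅ d)).
  { intros. rewrite <- hom. reflexivity. }
  exists K, (fun y => exists x1 : G1, phi (x1, gone) = y), (fun y => exists x2 : G2, phi (gone, x2) = y).
  split; [auto|split; [auto|split; [|split; [|split; [|split; [|split; [|split; auto]]]]]]].
  - apply hom_range_subgroup with (f := fun x1 => phi (x1, gone)).
    intros x y. simpl. now rewrite hp, gmul1l.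
  - apply hom_range_subgroup with (f := fun x2 => phi (gone, x2)).
    intros x y. simpl. now rewrite hp, gmul1l.
  - intros g [a <-]. apply Kimg. eauto.
  - intros g [a <-]. apply Kimg. eauto.
  - intros x y [a <-] [b <-]. now rewrite !hp, !gmul1l, !gmul1r.
  - intros k hk. apply Kimg in hk as [[x1 x2] <-].
    exists (phi (x1, gone)), (phi (gone, x2)). split; [eauto|split; [eauto|]].
    now rewrite hp, gmul1l, gmul1r.
Qed.

Lemma finite_index_generated (K : G -> Prop) : finitely_generated G -> subgroup K ->
  finite_index G K -> exists S, generates G K S.
Proof.
  intros [SG gG] SK [n hn]. destruct (has_index_transversal K n SK hn) as [T0 [_ [_ cT0]]].
  destruct (exists_transversal K (fun _ => True) T0 gone) as [T [_ [T1 [Tsep Tcov]]]]; auto.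
  assert (Stop : subgroup (fun _ : G => True)) by (split; auto).
  destruct (schreier (fun _ => True) K SG T Stop SK (fun _ _ => I) gG (fun _ _ => I) T1 Tsep Tcov)
    as [U [_ [hUf hUg]]].
  assert (UK : forall u, In u U -> K u).
  { intros u hu. destruct (hUf u hu) as [s [t [t' [_ [_ [_ [e ->]]]]]]]. exact e. }
  exists U. split; auto. intro x. split; [apply hUg|]. now apply generated_min.
Qed.

Lemma split_generators (K A B : G -> Prop) S : subgroup K -> subgroup A -> subgroup B ->
  (forall g, A g -> K g) -> (forall g, B g -> K g) -> (forall a b, A a -> B b -> a ⋅ b = b ⋅ a) ->
  (forall k, K k -> prodset A B k) -> generates G K S ->
  exists la lb, (forall s, In s la -> A s) /\ (forall s, In s lb -> B s) /\
    generates G K (la ++ lb) /\ forall k, K k -> prodset (generated G la) (generated G lb) k.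
Proof.
  intros SK SA SB AK BK commAB decAB [SinK gS].
  destruct (choice (fun (k : G) (p : G * G) => K k -> A (fst p) /\ B (snd p) /\ k = fst p ⋅ snd p))
    as [f hf].
  { intro k. destruct (classic (K k)) as [hk|hk].
    - destruct (decAB k hk) as [a [b [ha [hb e]]]]. exists (a, b). auto.
    - exists (gone, gone). tauto. }
  set (la := map (fun k => fst (f k)) S). set (lb := map (fun k => snd (f k)) S).
  assert (laA : forall s, In s la -> A s).
  { intros s hs. apply in_map_iff in hs as [k [<- hk]]. apply hf; auto. }
  assert (lbB : forall s, In s lb -> B s).
  { intros s hs. apply in_map_iff in hs as [k [<- hk]]. apply hf; auto. }
  assert (Kgen : generates G K (la ++ lb)).
  { split.
    - intros s hs. apply in_app_or in hs as [hs|hs]; auto.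
    - intro x. split.
      + intro hx. apply (generated_sub S); [|now apply gS].
        intros u hu. destruct (hf u (SinK u hu)) as [_ [_ ->]]. apply subgroupM; [apply generated_subgroup| |].
        * apply generated_app_l, generated_in, in_map_iff. eauto.
        * apply generated_app_r, generated_in, in_map_iff. eauto.
      + apply generated_min; auto.
        intros s hs. apply in_app_or in hs as [hs|hs]; auto. }
  exists la, lb. split; [auto|split; [auto|split; [auto|]]].
  set (A0 := generated G la). set (B0 := generated G lb).
  assert (comm : forall a b, A0 a -> B0 b -> a ⋅ b = b ⋅ a).
  { intros a b ha hb. apply (generated_central la B); auto.
    apply (generated_min lb); auto. }
  assert (SAB : subgroup (prodset A0 B0)).
  { apply prodset_subgroup with A0; try apply generated_subgroup; auto.
    intros a b ha hb. now rewrite (comm a b), mulgK. }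
  intros k hk. apply Kgen in hk. apply (generated_min (la ++ lb) _ k SAB); auto.
  intros s hs. apply in_app_or in hs as [hs|hs].
  - apply prodset_l; [apply generated_subgroup|]. now apply generated_in.
  - apply prodset_r; [apply generated_subgroup|]. now apply generated_in.
Qed.
End Presentation.

Local Close Scope nat_scope.

Theorem proposition4p5 (G : group) :
  finitely_generated G -> residually_finite G -> presentable_by_product G ->
  rank_gradient G = Finite 0.
Proof.
  intros fg rf pbp.
  assert (Ginf : infinite_group G) by apply pbp.
  destruct (presentation_commuting_factors pbp)
    as [K [A [B [SK [fiK [SA [SB [AK [BK [commAB [decAB [Ainf Binf]]]]]]]]]]]].
  destruct (finite_index_generated K fg SK fiK) as [S gS].
  destruct (split_generators K A B S SK SA SB AK BK commAB decAB gS) as [la [lb [laA [lbB [Kgen dec]]]]].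
  destruct (small_rank_of_commuting_product K A B (generated G la) (generated G lb)) with la lb
    as [c hc]; try apply generated_subgroup; auto.
  - intros g. apply generated_min; auto.
  - intros g. apply generated_min; auto.
  - apply generates_generated.
  - intros s hs. now apply generated_in.
  - destruct fiK as [n hn]. destruct (has_index_transversal K n SK hn) as [T [_ [_ cT]]].
    exact (rank_gradient_eq0 K c Ginf SK (ex_intro _ T cT) hc).
Qed.
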